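(* There is an equality $(\Theta\otimes\mathbb C)\setminus\mathcal H_{\mathbb C}=\bigcup_{L\in\operatorname{Mut}_0(N)}\varphi_L(\mathbb H_+)$, and the union on the right is disjoint.
   Context: $R$ is a three-dimensional complete local Gorenstein normal $\mathbb C$-algebra with an isolated cDV singularity; $f\colon X\to\operatorname{Spec}R$ a flopping contraction ($X$ Gorenstein terminal) with $n$ exceptional curves; $N=R\oplus N_1\oplus\dots\oplus N_n$ the push-forward of the standard Van den Bergh tilting bundle. Mutation: for modifying $L=\bigoplus_{j=0}^nL_j$ and index $i$, $\nu_iL$ is the Iyama–Wemyss mutation replacing the $i$th summand; $\operatorname{Mut}_0(N)$ is the set of iterated mutations of $N$ never mutating at index $0$ (where $N_0=R$). For $L\in\operatorname{Mut}_0(N)$, $\mathcal K_L=K_0(\operatorname{per}\operatorname{End}_R(L))=\bigoplus_{j=0}^n\mathbb Z[P_j]$ with $P_j=\operatorname{Hom}_R(L,L_j)$, $\Theta_L=\mathcal K_L/\mathbb Z[P_0]$ with basis $[P_1],\dots,[P_n]$, $\Theta=\Theta_N$. Mutation functors $\mathbf R\operatorname{Hom}(\operatorname{Hom}_R(L,\nu_iL),-)$ for $i\ne0$ induce isomorphisms $\Theta_L\to\Theta_{\nu_iL}$, and $\varphi_L\colon\Theta_L\otimes\mathbb C\to\Theta\otimes\mathbb C$ is induced by a shortest walk from $L$ to $N$ inside $\operatorname{Mut}_0(N)$ (independent of the choice). With $C_+$ the open positive orthant, the cones $\varphi_L(C_+)$, $L\in\operatorname{Mut}_0(N)$, are the chambers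 of a finite simplicial real hyperplane arrangement $\mathcal H$ in $\Theta\otimes\mathbb R$; $\mathcal H_{\mathbb C}=\bigcup_{H\in\mathcal H}H\otimes\mathbb C$. $\mathbb H=\{re^{\mathrm i\pi\theta}:r>0,0<\theta\le1\}$ is the semi-closed upper half plane and $\mathbb H_+=\{z\in\Theta_L\otimes\mathbb C: z_j\in\mathbb H\text{ for all }1\le j\le n\}$. *)

From HB Require Import structures.
From mathcomp Require Import all_boot all_order all_algebra.
Set Implicit Arguments. Unset Strict Implicit. Unset Printing Implicit Defensive.
Import Order.TTheory GRing.Theory Num.Theory.
Local Open Scope ring_scope.

(* Theta (x) R is modelled as row vectors 'rV[R]_n (coordinates in the basis
   [P_1],...,[P_n]); a complex vector z in Theta (x) C is a pair (x, y) of real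
   vectors, z = x + i y. *)

Definition pairing (R : ringType) (n : nat) (a x : 'rV[R]_n) : R :=
  \sum_(i < n) a 0 i * x 0 i.

(* The semi-closed upper half plane  H = { r e^{i pi t} : r > 0, 0 < t <= 1 },
   for the complex number a + i b. *)
Definition in_upper (R : numDomainType) (a b : R) : bool :=
  (0 < b) || ((b == 0) && (a < 0)).

(* Complexification H_C: the union of H (x) C over the hyperplanes
   H = ker(pairing a _) of the arrangement (given by normal vectors). *)
Definition in_HC (R : ringType) (n : nat) (hyps : seq 'rV[R]_n)
    (x y : 'rV[R]_n) : Prop :=
  exists2 a, a \in hyps & pairing a x = 0 /\ pairing a y = 0.

(* Chambers of the real arrangement: the regions
   { x | sign (a . x) = sign (a . x0) for all a } for a point x0 off all
   hyperplanes (= the connected components of the complement). *)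
Definition is_chamber (R : numDomainType) (n : nat) (hyps : seq 'rV[R]_n)
    (C : 'rV[R]_n -> Prop) : Prop :=
  exists x0 : 'rV[R]_n,
    (forall a, a \in hyps -> pairing a x0 != 0) /\
    (forall x, C x <-> (forall a, a \in hyps -> 0 < pairing a x * pairing a x0)).

(* phi_L(C_+), where phi_L is given (on row vectors) by w |-> w *m M. *)
Definition orthant_img (R : numDomainType) (n : nat) (M : 'M[R]_n)
    (x : 'rV[R]_n) : Prop :=
  exists2 w : 'rV[R]_n, (forall i, 0 < w 0 i) & x = w *m M.

(* phi_L(H_+), phi_L the C-linear extension of the real map M:
   z = x + i y lies in it iff z = (u + i v) M with (u_j + i v_j) in H for all j. *)
Definition in_phi_Hplus (R : numDomainType) (n : nat) (M : 'M[R]_n)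
    (x y : 'rV[R]_n) : Prop :=
  exists u v : 'rV[R]_n,
    (forall i, in_upper (u 0 i) (v 0 i)) /\ x = u *m M /\ y = v *m M.

From HB Require Import structures.
From mathcomp Require Import all_boot all_order all_algebra.
From mathcomp Require Import ring lra.
Import Order.TTheory GRing.Theory Num.Theory.
Set Implicit Arguments.
Unset Strict Implicit.
Unset Printing Implicit Defensive.
Local Open Scope ring_scope.

(* Write z = x + i y.  A complex number a + i b lies in the
   semi-closed upper half plane iff the real affine function K |-> K b - a is
   positive for all large K.  Applying this coordinatewise (uniformly, since
   there are finitely many coordinates), z lies in phi_L(H_+) iff the real
   point K y - x lies in the open cone phi_L(C_+) for all large K.
   On the other hand, z avoids H_C iff no hyperplane contains both x and y,
   i.e. no affine function K |-> <a, K y - x> vanishes identically; then each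
   of them has an eventually constant nonzero sign, so K y - x eventually
   stays in one chamber.  Since chambers are exactly the cones phi_L(C_+),
   pairwise distinct for distinct L, both the equality and the disjointness
   follow. *)

Section Eventually.
Variable R : realFieldType.

Definition eventually (P : R -> Prop) : Prop :=
  exists K, forall K', K <= K' -> P K'.

Lemma eventually_and (P Q : R -> Prop) :
  eventually P -> eventually Q -> eventually (fun K => P K /\ Q K).
Proof.
move=> [K1 hP] [K2 hQ]; exists (Num.max K1 K2) => K'.
by rewrite ge_max => /andP[h1 h2]; split; [exact: hP | exact: hQ].
Qed.

Lemma eventually_all (T : eqType) (s : seq T) (P : T -> R -> Prop) :
  (forall t, t \in s -> eventually (P t)) ->
  eventually (fun K => forall t, t \in s -> P t K).
Proof.
elim: s => [|t s IH] hs; first by exists 0.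
have hs' u : u \in s -> eventually (P u) by move=> hu; apply: hs; rewrite in_cons hu orbT.
have [K hK] := eventually_and (hs t (mem_head t s)) (IH hs').
exists K => K' /hK [hPt hPs] u; rewrite in_cons => /predU1P[-> // | /hPs //].
Qed.

Lemma same_sign (s A B : R) : 0 < A * s -> 0 < B * s -> 0 < A * B.
Proof.
have [s_gt0|s_lt0|<-] := ltgtP 0 s; last by rewrite mulr0 ltxx.
- by rewrite !(pmulr_lgt0 _ s_gt0) => A_gt0 B_gt0; rewrite mulr_gt0.
- by rewrite !(nmulr_lgt0 _ s_lt0) => A_lt0 B_lt0; rewrite nmulr_rgt0.
Qed.

Lemma eventually_affine_pos (b c : R) :
  0 < b -> eventually (fun K => 0 < K * b - c).
Proof.
move=> b_gt0; exists (c / b + 1) => K hK.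
have : (c / b + 1) * b <= K * b by rewrite ler_pM2r.
by rewrite mulrDl divfK ?gt_eqF // mul1r; lra.
Qed.

Lemma eventually_affine_pos_slope (b c : R) :
  eventually (fun K => 0 < K * b - c) -> 0 <= b.
Proof.
move=> [K hK]; rewrite leNgt; apply/negP => b_lt0.
have hmax : K <= Num.max K (c / b) by rewrite le_max lexx.
have : Num.max K (c / b) * b <= c / b * b by rewrite ler_nM2r // le_max lexx orbT.
by rewrite divfK ?lt_eqF //; have := hK _ hmax; lra.
Qed.

Lemma in_upperE (a b : R) :
  in_upper a b <-> eventually (fun K => 0 < K * b - a).
Proof.
split.
- case/orP=> [b_gt0 | /andP[/eqP-> a_lt0]]; first exact: eventually_affine_pos.
  by exists 0 => K _; rewrite mulr0 sub0r oppr_gt0.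
- move=> ev; rewrite /in_upper.
  have := eventually_affine_pos_slope ev; rewrite le_eqVlt => /predU1P[b0 | -> //].
  have [K hK] := ev; have := hK K (lexx K).
  by rewrite -b0 eqxx mulr0 sub0r oppr_gt0 ltxx => ->.
Qed.

Lemma eventually_sign_stable (b c : R) : (b != 0) || (c != 0) ->
  eventually (fun K => forall K', K <= K' -> 0 < (K * b - c) * (K' * b - c)).
Proof.
move=> bc.
suff [s [K hK]] : exists s, eventually (fun K => 0 < (K * b - c) * s).
  exists K => K1 hK1 K2 hK12.
  exact: same_sign (hK K1 hK1) (hK K2 (le_trans hK1 hK12)).
have [b0 | b_neq0] := eqVneq b 0.
- exists (- c); exists 0 => K _.
  rewrite b0 mulr0 sub0r mulrNN; move: bc; rewrite b0 eqxx /= => c_neq0.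
  by rewrite lt_def mulf_neq0 //= -expr2 sqr_ge0.
- exists b; have [|K hK] := @eventually_affine_pos (b * b) (c * b).
    by rewrite lt_def mulf_neq0 //= -expr2 sqr_ge0.
  by exists K => K' /hK; rewrite mulrBl mulrA.
Qed.

End Eventually.

Section Chambers.
Variables (R : realFieldType) (n : nat) (hyps : seq 'rV[R]_n).

Lemma pairingZB (a x y : 'rV[R]_n) (K : R) :
  pairing a (K *: y - x) = K * pairing a y - pairing a x.
Proof.
rewrite /pairing mulr_sumr -sumrB; apply: eq_bigr => i _; rewrite !mxE; ring.
Qed.

Lemma chamber_off_hyps (C : 'rV[R]_n -> Prop) z a :
  is_chamber hyps C -> C z -> a \in hyps -> pairing a z != 0.
Proof.
move=> [x0 [_ hC]] /hC hz /hz.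
by apply: contraTneq => ->; rewrite mul0r ltxx.
Qed.

Lemma chamber_eq (C C' : 'rV[R]_n -> Prop) p :
  is_chamber hyps C -> is_chamber hyps C' -> C p -> C' p ->
  forall x, C x <-> C' x.
Proof.
move=> [x0 [_ hC]] [x1 [_ hC']] /hC hp /hC' hp' x; rewrite hC hC'.
have x0x1 a : a \in hyps -> 0 < pairing a x0 * pairing a x1.
  by move=> ha; apply: (@same_sign _ (pairing a p)); rewrite mulrC; [exact: hp | exact: hp'].
split=> hx a ha.
- by apply: same_sign (hx a ha) _; rewrite mulrC; exact: x0x1.
- exact: same_sign (hx a ha) (x0x1 a ha).
Qed.

Lemma eventually_in_chamber (x y : 'rV[R]_n) : ~ in_HC hyps x y ->
  exists2 C, is_chamber hyps C & eventually (fun K => C (K *: y - x)).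
Proof.
move=> offHC.
have stable a : a \in hyps -> eventually (fun K => forall K', K <= K' ->
    0 < pairing a (K *: y - x) * pairing a (K' *: y - x)).
  move=> ha; have [|K hK] := @eventually_sign_stable _ (pairing a y) (pairing a x).
    by rewrite -negb_and; apply/negP => /andP[/eqP ay /eqP ax]; apply: offHC; exists a.
  by exists K => K1 hK1 K2 hK12; rewrite !pairingZB; exact: hK.
have [K0 hK0] := eventually_all stable.
pose p := K0 *: y - x.
exists (fun z => forall a, a \in hyps -> 0 < pairing a z * pairing a p).
- exists p; split=> // a ha.
  have := hK0 K0 (lexx K0) a ha K0 (lexx K0).
  by apply: contraTneq => ->; rewrite mul0r ltxx.
- by exists K0 => K hK a ha; rewrite mulrC; exact: hK0 K0 (lexx K0) a ha K hK.
Qed.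

End Chambers.

Section HalfPlaneImage.
Variables (R : realFieldType) (n : nat) (M : 'M[R]_n).
Hypothesis M_unit : M \in unitmx.

Lemma in_phi_HplusE (x y : 'rV[R]_n) :
  in_phi_Hplus M x y <-> eventually (fun K => orthant_img M (K *: y - x)).
Proof.
split.
- move=> [u [v [uv_up [-> ->]]]].
  have [K hK] := @eventually_all _ _ (enum 'I_n)
    (fun j K => 0 < K * v 0 j - u 0 j) (fun j _ => (in_upperE _ _).1 (uv_up j)).
  exists K => K' hK'; exists (K' *: v - u); last by rewrite mulmxBl scalemxAl.
  by move=> j; rewrite !mxE; apply: hK hK' j (mem_enum _ _).
- move=> ev; exists (x *m invmx M), (y *m invmx M).
  split; last by rewrite !mulmxKV.
  move=> j; apply/in_upperE; have [K hK] := ev.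
  exists K => K' /hK [w w_gt0 ew].
  have w_def : w = (K' *: y - x) *m invmx M by rewrite ew mulmxK.
  by have := w_gt0 j; rewrite w_def mulmxBl -scalemxAl !mxE.
Qed.

End HalfPlaneImage.

Theorem proposition3p10 (R : realFieldType) (n : nat) (I : Type)
    (M : I -> 'M[R]_n) (hyps : seq 'rV[R]_n)
    (hM : forall L, M L \in unitmx)
    (hnz : forall a, a \in hyps -> a != 0)
    (hchamber : forall L, is_chamber hyps (orthant_img (M L)))
    (hall : forall C, is_chamber hyps C ->
              exists L, forall x, C x <-> orthant_img (M L) x)
    (hinj : forall L L', (forall x, orthant_img (M L) x <-> orthant_img (M L') x) ->
              L = L') :
  (forall x y : 'rV[R]_n,
      ~ in_HC hyps x y <-> exists L, in_phi_Hplus (M L) x y) /\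
  (forall (L L' : I) (x y : 'rV[R]_n),
      in_phi_Hplus (M L) x y -> in_phi_Hplus (M L') x y -> L = L').
Proof.
split=> [x y | L L' x y].
- split=> [offHC | [L /(in_phi_HplusE (hM L)) [K hK]] [a ha [ax ay]]].
  + have [C C_chamber [K hK]] := eventually_in_chamber offHC.
    have [L hL] := hall C C_chamber.
    by exists L; apply/(in_phi_HplusE (hM L)); exists K => K' /hK /hL.
  + have := chamber_off_hyps (hchamber L) (hK K (lexx K)) ha.
    by rewrite pairingZB ax ay mulr0 subr0 eqxx.
- move=> /(in_phi_HplusE (hM L)) evL /(in_phi_HplusE (hM L')) evL'.
  have [K hK] := eventually_and evL evL'; have [inL inL'] := hK K (lexx K).
  by apply: hinj; exact: chamber_eq (hchamber L) (hchamber L') inL inL'.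
Qed.
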